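(* Let $\{G_i\}_{i\in I}$ be a family of perfect groups (i.e. $G_i=G_i'$ for all $i$). Let $\mathcal{V}$ be either the variety of abelian groups, or a variety $\mathcal{N}_c$ of nilpotent groups of class at most $c$ ($c\ge1$), or a polynilpotent variety $\mathcal{N}_{c_1,\dots,c_s}$. Then $\prod_{i\in I}G_i$ is $\mathcal{V}$-capable if and only if each $G_i$ is $\mathcal{V}$-capable.
   Context: $\prod_{i\in I}G_i$ is the restricted direct product (elements with only finitely many nontrivial coordinates). $\mathcal{N}_{c_1,\dots,c_s}$ is the variety of groups $G$ with $\gamma_{c_s+1}(\cdots\gamma_{c_1+1}(G)\cdots)=1$, $\gamma_k$ the lower central series. For a variety $\mathcal{V}$ with laws $V$, the marginal subgroup $V^*(E)$ of a group $E$ is the set of $g\in E$ with $v(x_1,\dots,gx_i,\dots,x_n)=v(x_1,\dots,x_n)$ for all laws $v\in V$, all $x_j\in E$ and all $i$; $G$ is $\mathcal{V}$-capable if $G\cong E/V^*(E)$ for some group $E$ (for the abelian variety this is ordinary capability, $G\cong E/Z(E)$). *)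

From Stdlib Require Import List Arith PeanoNat ProofIrrelevance FunctionalExtensionality.
Import ListNotations.
Set Implicit Arguments.

Record group := Group {
  carrier :> Type;
  gmul : carrier -> carrier -> carrier;
  ginv : carrier -> carrier;
  gone : carrier;
  gmulA : forall x y z, gmul x (gmul y z) = gmul (gmul x y) z;
  gmul1l : forall x, gmul gone x = x;
  gmul1r : forall x, gmul x gone = x;
  gmulVl : forall x, gmul (ginv x) x = gone;
  gmulVr : forall x, gmul x (ginv x) = gone }.
Arguments gmul {g}. Arguments ginv {g}. Arguments gone {g}.

Definition is_hom (E G : group) (f : E -> G) : Prop :=
  forall x y, f (gmul x y) = gmul (f x) (f y).
Arguments is_hom {E G}.

Definition comm (E : group) (x y : E) : E :=
  gmul (gmul (gmul (ginv x) (ginv y)) x) y.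
Arguments comm {E}.

(** Left-normed commutator [x_0, x_1, ..., x_c]  (the word defining N_c). *)
Fixpoint lcomm (E : group) (c : nat) (x : nat -> E) : E :=
  match c with
  | 0 => x 0
  | S c' => @comm E (lcomm E c' x) (x (S c'))
  end.
Arguments lcomm {E}.

(** Polynilpotent word for N_{c_1,...,c_s}, cs = [c_1; ...; c_s].
    A word is represented together with its number of variables n;
    step c (n, w) = (  (c+1) n,  [w(x_0..x_{n-1}), w(x_n..), ..., w(x_{cn}..)] ). *)
Definition pstep (E : group) (p : nat * ((nat -> E) -> E)) (c : nat)
  : nat * ((nat -> E) -> E) :=
  let (n, w) := p in
  (S c * n, fun x => lcomm c (fun j => w (fun k => x (j * n + k)))).

Definition polyword (cs : list nat) (E : group) : (nat -> E) -> E :=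
  snd (fold_left (@pstep E) cs (1, fun x : nat -> E => x 0)).
Arguments polyword cs {E}.

Definition upd (E : group) (x : nat -> E) (i : nat) (a : E) : nat -> E :=
  fun k => if Nat.eqb k i then a else x k.
Arguments upd {E}.

Definition marginal (cs : list nat) (E : group) (g : E) : Prop :=
  forall (x : nat -> E) (i : nat),
    polyword cs (upd x i (gmul g (x i))) = polyword cs x.
Arguments marginal cs {E}.

(** G is V-capable: G is isomorphic to E / V*(E) for some group E, i.e.
    there is a surjective homomorphism E -> G whose kernel is V*(E). *)
Definition capable (cs : list nat) (G : group) : Prop :=
  exists (E : group) (f : E -> G),
    is_hom f /\ (forall y : G, exists e, f e = y) /\
    (forall e : E, f e = gone <-> marginal cs e).

Fixpoint prod_list (E : group) (l : list E) : E :=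
  match l with [] => gone | a :: l' => gmul a (prod_list E l') end.
Arguments prod_list {E}.

Definition perfect (G : group) : Prop :=
  forall x : G, exists l : list (G * G),
    x = prod_list (map (fun p => comm (fst p) (snd p)) l).

Section RDP.
Variables (I : Type) (G : I -> group).

Definition fin_supp (f : forall i, G i) : Prop :=
  exists l : list I, forall i, ~ In i l -> f i = gone.

Definition rdp_car := { f : forall i, G i | fin_supp f }.

Lemma ginv1 (H : group) : ginv (@gone H) = gone.
Proof. rewrite <- (gmul1l H (ginv gone)). apply gmulVr. Qed.

Lemma fin_supp_mul (f g : forall i, G i) :
  fin_supp f -> fin_supp g -> fin_supp (fun i => gmul (f i) (g i)).
Proof.
  intros [l1 H1] [l2 H2]. exists (l1 ++ l2). intros i Hi.
  rewrite H1, H2. apply gmul1l.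
  - intro; apply Hi; apply in_or_app; right; auto.
  - intro; apply Hi; apply in_or_app; left; auto.
Qed.

Lemma fin_supp_inv (f : forall i, G i) :
  fin_supp f -> fin_supp (fun i => ginv (f i)).
Proof. intros [l H]. exists l. intros i Hi. rewrite H by auto. apply ginv1. Qed.

Lemma fin_supp_one : fin_supp (fun i => gone).
Proof. exists nil. auto. Qed.

Definition rdp_mul (a b : rdp_car) : rdp_car :=
  exist _ (fun i => gmul (proj1_sig a i) (proj1_sig b i))
    (fin_supp_mul (proj2_sig a) (proj2_sig b)).
Definition rdp_inv (a : rdp_car) : rdp_car :=
  exist _ (fun i => ginv (proj1_sig a i)) (fin_supp_inv (proj2_sig a)).
Definition rdp_one : rdp_car := exist _ (fun i => gone) fin_supp_one.

Lemma rdp_eq (a b : rdp_car) : proj1_sig a = proj1_sig b -> a = b.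
Proof.
  destruct a as [f p], b as [g q]; simpl; intros ->.
  f_equal; apply proof_irrelevance.
Qed.

Ltac rdp_solve lem :=
  apply rdp_eq; simpl; apply functional_extensionality_dep; intro; apply lem.

Lemma rdp_mulA x y z : rdp_mul x (rdp_mul y z) = rdp_mul (rdp_mul x y) z.
Proof. rdp_solve gmulA. Qed.
Lemma rdp_mul1l x : rdp_mul rdp_one x = x.
Proof. rdp_solve gmul1l. Qed.
Lemma rdp_mul1r x : rdp_mul x rdp_one = x.
Proof. rdp_solve gmul1r. Qed.
Lemma rdp_mulVl x : rdp_mul (rdp_inv x) x = rdp_one.
Proof. rdp_solve gmulVl. Qed.
Lemma rdp_mulVr x : rdp_mul x (rdp_inv x) = rdp_one.
Proof. rdp_solve gmulVr. Qed.

Definition rdp : group :=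
  @Group rdp_car rdp_mul rdp_inv rdp_one rdp_mulA rdp_mul1l rdp_mul1r rdp_mulVl rdp_mulVr.
End RDP.

From Stdlib Require Import List Arith Lia.
From Stdlib Require Import ProofIrrelevance FunctionalExtensionality ClassicalEpsilon.
Import ListNotations.
Set Implicit Arguments.

(* If every [G i] is [E i / V*(E i)], the restricted product of the [E i] works, since
   marginality in a restricted product is checked coordinatewise.
   Conversely, let [f : E -> rdp G] be onto with kernel [V*(E)], and let [E_i], [C_i] be the
   preimages of the factor [G i] and of the product of the other factors. A word value does
   not change when its arguments are changed modulo [ker f]; conjugating arguments from [E_i]
   by an element of [C_i] is such a change, so word values on [E_i] centralize [C_i]. A
   perfect group is generated by its word values, hence every element of [G i] lifts to
   [E_i] intersected with the centralizer of [C_i], and every [x] in [E] factors as [z c]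
   with such a lift [z] and [c] in [C_i]. The word is multiplicative on these products,
   which turns marginality in [E_i] into marginality in [E]; so [V*(E_i)] is the kernel of
   the restriction [E_i -> G i]. *)


Lemma dep_functional_choice (A : Type) (B : A -> Type) (R : forall a, B a -> Prop) :
  (forall a, exists b, R a b) -> exists g : forall a, B a, forall a, R a (g a).
Proof.
  intro H. exists (fun a => proj1_sig (constructive_indefinite_description _ (H a))).
  intro a. exact (proj2_sig (constructive_indefinite_description _ (H a))).
Qed.

Section GroupFacts.
Context {E : group}.
Implicit Types x y : E.

Lemma mulKg x y : gmul (ginv x) (gmul x y) = y.
Proof. rewrite gmulA, gmulVl. apply gmul1l. Qed.

Lemma mulKVg x y : gmul x (gmul (ginv x) y) = y.
Proof. rewrite gmulA, gmulVr. apply gmul1l. Qed.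

Lemma eq_invg_mul x y : gmul x y = gone -> y = ginv x.
Proof. intro H. rewrite <- (mulKg x y), H. apply gmul1r. Qed.

Lemma invMg x y : ginv (gmul x y) = gmul (ginv y) (ginv x).
Proof. symmetry. apply eq_invg_mul. rewrite <- gmulA, mulKVg. apply gmulVr. Qed.

Lemma invgK x : ginv (ginv x) = x.
Proof. symmetry. apply eq_invg_mul. apply gmulVl. Qed.

End GroupFacts.

Ltac gsimpl := repeat first [ rewrite <- gmulA | rewrite gmul1l | rewrite gmul1r
  | rewrite gmulVl | rewrite gmulVr | rewrite mulKg | rewrite mulKVg
  | rewrite invMg | rewrite invgK | rewrite ginv1 ].

Definition conjg (E : group) (h x : E) : E := gmul (gmul (ginv h) x) h.
Arguments conjg {E}.

Definition commute (E : group) (x y : E) : Prop := gmul x y = gmul y x.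
Arguments commute {E}.

Lemma conjg_hom {E : group} (h : E) : is_hom (conjg h).
Proof. intros x y. unfold conjg. gsimpl. reflexivity. Qed.

Section Morphism.
Variables (E H : group) (f : E -> H).
Hypothesis hf : is_hom f.

Lemma morph1 : f gone = gone.
Proof.
  pose proof (hf gone gone) as K. rewrite gmul1l in K.
  rewrite <- (mulKg (f gone) (f gone)), <- K. apply gmulVl.
Qed.

Lemma morphV x : f (ginv x) = ginv (f x).
Proof. apply eq_invg_mul. rewrite <- hf, gmulVr. exact morph1. Qed.

Lemma morphR x y : f (comm x y) = comm (f x) (f y).
Proof. unfold comm. rewrite !hf, !morphV. reflexivity. Qed.

Lemma morphJ x y : f (conjg x y) = conjg (f x) (f y).
Proof. unfold conjg. rewrite !hf, !morphV. reflexivity. Qed.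

Lemma morph_lcomm c x : f (lcomm c x) = lcomm c (fun j => f (x j)).
Proof. induction c as [|c IH]; simpl; [reflexivity|]. rewrite morphR, IH. reflexivity. Qed.

End Morphism.

Record subgroup (E : group) := Subgroup {
  sgmem :> E -> Prop;
  sgmem1 : sgmem gone;
  sgmemM : forall x y, sgmem x -> sgmem y -> sgmem (gmul x y);
  sgmemV : forall x, sgmem x -> sgmem (ginv x) }.
Arguments sgmem1 {E}. Arguments sgmemM {E}. Arguments sgmemV {E}.

Section Subgroup.
Variables (E : group) (H : subgroup E).

Definition subg_mul (a b : {x : E | H x}) : {x : E | H x} :=
  exist _ (gmul (proj1_sig a) (proj1_sig b)) (sgmemM H _ _ (proj2_sig a) (proj2_sig b)).
Definition subg_inv (a : {x : E | H x}) : {x : E | H x} :=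
  exist _ (ginv (proj1_sig a)) (sgmemV H _ (proj2_sig a)).
Definition subg_one : {x : E | H x} := exist _ gone (sgmem1 H).

Lemma subg_ext (a b : {x : E | H x}) : proj1_sig a = proj1_sig b -> a = b.
Proof. destruct a, b; simpl; intros ->. f_equal. apply proof_irrelevance. Qed.

Definition subg : group.
Proof.
  refine (@Group {x : E | H x} subg_mul subg_inv subg_one _ _ _ _ _);
    intros; apply subg_ext; simpl;
    [apply gmulA | apply gmul1l | apply gmul1r | apply gmulVl | apply gmulVr].
Defined.

Lemma subg_val_hom : is_hom (fun a : subg => proj1_sig a).
Proof. intros a b. reflexivity. Qed.

End Subgroup.

Definition preimg (E H : group) (f : E -> H) (hf : is_hom f) (K : subgroup H) : subgroup E.
Proof.
  refine (@Subgroup E (fun x => K (f x)) _ _ _).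
  - rewrite (morph1 hf). apply sgmem1.
  - intros x y Hx Hy. rewrite hf. apply sgmemM; assumption.
  - intros x Hx. rewrite (morphV hf). apply sgmemV; assumption.
Defined.

Definition trivg (E : group) : subgroup E.
Proof.
  refine (@Subgroup E (fun x => x = gone) eq_refl _ _).
  - intros x y -> ->. apply gmul1l.
  - intros x ->. apply ginv1.
Defined.

Definition centralizer {E : group} (S : E -> Prop) : subgroup E.
Proof.
  refine (@Subgroup E (fun z => forall b, S b -> commute z b) _ _ _); unfold commute.
  - intros b _. rewrite gmul1l, gmul1r. reflexivity.
  - intros x y Hx Hy b Hb. rewrite <- gmulA, Hy, !gmulA, Hx by exact Hb. reflexivity.
  - intros x Hx b Hb. transitivity (gmul (ginv x) (gmul (gmul b x) (ginv x))).
    + gsimpl. reflexivity.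
    + rewrite <- Hx by exact Hb. gsimpl. reflexivity.
Defined.

Definition setIg {E : group} (H K : subgroup E) : subgroup E.
Proof.
  refine (@Subgroup E (fun x => H x /\ K x) _ _ _).
  - split; apply sgmem1.
  - intros x y [] []. split; apply sgmemM; assumption.
  - intros x []. split; apply sgmemV; assumption.
Defined.

Section DirectProduct.
Variables E F : group.

Definition prodg : group.
Proof.
  refine (@Group (E * F) (fun a b => (gmul (fst a) (fst b), gmul (snd a) (snd b)))
    (fun a => (ginv (fst a), ginv (snd a))) (gone, gone) _ _ _ _ _);
    intros; repeat match goal with p : _ * _ |- _ => destruct p end; simpl; f_equal;
    first [apply gmulA | apply gmul1l | apply gmul1r | apply gmulVl | apply gmulVr].
Defined.

Definition setXg (H : subgroup E) (K : subgroup F) : subgroup prodg.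
Proof.
  refine (@Subgroup prodg (fun a => H (fst a) /\ K (snd a)) _ _ _).
  - split; apply sgmem1.
  - intros x y [] []. split; apply sgmemM; assumption.
  - intros x []. split; apply sgmemV; assumption.
Defined.

End DirectProduct.

Lemma lcomm_ext (E : group) c (x y : nat -> E) :
  (forall j, j <= c -> x j = y j) -> lcomm c x = lcomm c y.
Proof.
  induction c as [|c IH]; simpl; intro H; [apply H; lia|].
  rewrite IH, (H (S c)) by first [lia | intros; apply H; lia]. reflexivity.
Qed.

Definition arity (cs : list nat) : nat := fold_left (fun n c => S c * n) cs 1.

Lemma arity_rcons cs c : arity (cs ++ [c]) = S c * arity cs.
Proof. unfold arity. rewrite fold_left_app. reflexivity. Qed.

Lemma fst_fold_pstep (E : group) cs (p : nat * ((nat -> E) -> E)) :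
  fst (fold_left (@pstep E) cs p) = fold_left (fun n c => S c * n) cs (fst p).
Proof.
  revert p; induction cs as [|c cs IH]; intro p; simpl; [reflexivity|].
  rewrite IH. destruct p. reflexivity.
Qed.

Lemma polyword_rcons cs c (E : group) (x : nat -> E) :
  polyword (cs ++ [c]) x =
  lcomm c (fun j => polyword cs (fun k => x (j * arity cs + k))).
Proof.
  pose proof (fst_fold_pstep E cs (1, fun x => x 0)) as Hn. cbn [fst] in Hn.
  unfold polyword, arity. rewrite fold_left_app, <- Hn.
  destruct (fold_left (@pstep E) cs _). reflexivity.
Qed.

Lemma polyword_local cs (E : group) (x y : nat -> E) :
  (forall k, k < arity cs -> x k = y k) -> polyword cs x = polyword cs y.
Proof.
  revert x y; induction cs as [|c cs IH] using rev_ind; intros x y H.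
  - apply H. unfold arity. simpl. lia.
  - rewrite arity_rcons in H. rewrite !polyword_rcons.
    apply lcomm_ext. intros j Hj. apply IH. intros k Hk. apply H. nia.
Qed.

Lemma morph_polyword cs (E H : group) (f : E -> H) (hf : is_hom f) (x : nat -> E) :
  f (polyword cs x) = polyword cs (fun t => f (x t)).
Proof.
  revert x; induction cs as [|c cs IH] using rev_ind; intro x; [reflexivity|].
  rewrite !polyword_rcons, (morph_lcomm hf). f_equal.
  apply functional_extensionality. intro j. apply IH.
Qed.

Lemma polyword_mem cs (E : group) (H : subgroup E) (x : nat -> E) :
  (forall t, H (x t)) -> H (polyword cs x).
Proof.
  intro Hx. pose (y t := exist _ (x t) (Hx t) : subg H).
  change (H (polyword cs (fun t => proj1_sig (y t)))).
  rewrite <- (morph_polyword cs (@subg_val_hom _ H)). apply proj2_sig.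
Qed.

Lemma polyword_mul cs {E : group} {H K : subgroup E} {a c : nat -> E} :
  (forall h k, H h -> K k -> commute h k) -> (forall t, H (a t)) -> (forall t, K (c t)) ->
  polyword cs (fun t => gmul (a t) (c t)) = gmul (polyword cs a) (polyword cs c).
Proof.
  unfold commute. intros HK Ha Hc. set (P := setXg H K).
  set (mul := fun p : subg P => gmul (fst (proj1_sig p)) (snd (proj1_sig p))).
  assert (hmul : is_hom mul).
  { intros [[x1 x2] [Hx1 Hx2]] [[y1 y2] [Hy1 Hy2]]. unfold mul. simpl in *.
    rewrite <- !gmulA. f_equal. rewrite !gmulA, (HK y1 x2) by assumption. reflexivity. }
  pose (p t := exist _ (a t, c t) (conj (Ha t) (Hc t)) : subg P).
  change (polyword cs (fun t => mul (p t)) =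
          gmul (polyword cs (fun t => fst (proj1_sig (p t))))
               (polyword cs (fun t => snd (proj1_sig (p t))))).
  rewrite <- (morph_polyword cs hmul).
  assert (hfst : is_hom (fun q : subg P => fst (proj1_sig q))) by (intros ? ?; reflexivity).
  assert (hsnd : is_hom (fun q : subg P => snd (proj1_sig q))) by (intros ? ?; reflexivity).
  rewrite <- (morph_polyword cs hfst), <- (morph_polyword cs hsnd). reflexivity.
Qed.

Lemma map_upd (E H : group) (g : E -> H) (x : nat -> E) k a :
  (fun t => g (upd x k a t)) = upd (fun t => g (x t)) k (g a).
Proof.
  apply functional_extensionality. intro t. unfold upd. destruct (Nat.eqb t k); reflexivity.
Qed.

Lemma marginal_subg cs (E : group) (H : subgroup E) (e : subg H) :
  marginal cs (proj1_sig e) -> marginal cs e.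
Proof.
  intros He x k. apply subg_ext.
  rewrite !(morph_polyword cs (@subg_val_hom _ H)), map_upd. apply He.
Qed.

Lemma marginal_subg_val cs {E : group} {H : subgroup E} {e : subg H} (z : nat -> E) k :
  marginal cs e -> (forall t, H (z t)) ->
  polyword cs (upd z k (gmul (proj1_sig e) (z k))) = polyword cs z.
Proof.
  intros He Hz. pose (zs t := exist _ (z t) (Hz t) : subg H).
  pose proof (f_equal (@proj1_sig _ _) (He zs k)) as K.
  rewrite !(morph_polyword cs (@subg_val_hom _ H)), map_upd in K. exact K.
Qed.

Lemma polyword_marginal_congr cs (E : group) (x y : nat -> E) :
  (forall t, marginal cs (gmul (x t) (ginv (y t)))) -> polyword cs x = polyword cs y.
Proof.
  intro Hm. set (z n k := if k <? n then x k else y k).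
  assert (Hz : forall n, polyword cs (z n) = polyword cs y).
  { induction n as [|n IH].
    - reflexivity.
    - rewrite <- IH, <- (Hm n (z n) n). f_equal. apply functional_extensionality. intro k.
      unfold upd, z. destruct (Nat.eqb_spec k n) as [->|Hkn].
      + rewrite (proj2 (Nat.ltb_lt n (S n))), (proj2 (Nat.ltb_ge n n)) by lia. gsimpl. reflexivity.
      + destruct (Nat.ltb_spec k (S n)), (Nat.ltb_spec k n); reflexivity || lia. }
  rewrite <- (Hz (arity cs)). apply polyword_local. intros k Hk. unfold z.
  rewrite (proj2 (Nat.ltb_lt _ _) Hk). reflexivity.
Qed.

Lemma polyword_ker_congr cs (E H : group) (f : E -> H) (hf : is_hom f)
    (ker_marginal : forall e, f e = gone -> marginal cs e) (x y : nat -> E) :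
  (forall t, f (x t) = f (y t)) -> polyword cs x = polyword cs y.
Proof.
  intro Hxy. apply polyword_marginal_congr. intro t. apply ker_marginal.
  rewrite hf, (morphV hf), Hxy. apply gmulVr.
Qed.

Inductive gen (E : group) (S : E -> Prop) : E -> Prop :=
  | gen_in x : S x -> gen E S x
  | gen1 : gen E S gone
  | genM x y : gen E S x -> gen E S y -> gen E S (gmul x y)
  | genV x : gen E S x -> gen E S (ginv x).
Arguments gen {E}. Arguments gen_in {E S}. Arguments gen1 {E S}.
Arguments genM {E S}. Arguments genV {E S}.

Definition conj_closed {E : group} (S : E -> Prop) : Prop :=
  forall h x, S x -> S (conjg h x).

Lemma gen_mono {E : group} {S T : E -> Prop} :
  (forall x, S x -> T x) -> forall x, gen S x -> gen T x.
Proof.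
  intros ST x Hx.
  induction Hx; [apply gen_in, ST | apply gen1 | apply genM | apply genV]; assumption.
Qed.

Lemma gen_conj_closed (E : group) (S : E -> Prop) : conj_closed S -> conj_closed (gen S).
Proof.
  intros HS h x Hx. induction Hx.
  - apply gen_in, HS. assumption.
  - rewrite (morph1 (conjg_hom h)). apply gen1.
  - rewrite (conjg_hom h). apply genM; assumption.
  - rewrite (morphV (conjg_hom h)). apply genV. assumption.
Qed.

Lemma gen_lift (A B : group) (phi : A -> B) (hphi : is_hom phi) (P : subgroup A) (S : B -> Prop) :
  (forall s, S s -> exists a, P a /\ phi a = s) ->
  forall y, gen S y -> exists a, P a /\ phi a = y.
Proof.
  intros HS y Hy. induction Hy as [y Hy| |y1 y2 _ [a1 [P1 E1]] _ [a2 [P2 E2]]|y _ [a [Pa Ea]]].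
  - apply HS, Hy.
  - exists gone. split; [apply sgmem1 | apply (morph1 hphi)].
  - exists (gmul a1 a2). split; [apply sgmemM; assumption | rewrite hphi, E1, E2; reflexivity].
  - exists (ginv a). split; [apply sgmemV; assumption | rewrite (morphV hphi), Ea; reflexivity].
Qed.

Definition commset {E : group} (L U : E -> Prop) (z : E) : Prop :=
  exists a b, L a /\ U b /\ z = comm a b.

Lemma commset_conj_closed (E : group) (L U : E -> Prop) :
  conj_closed L -> conj_closed U -> conj_closed (commset L U).
Proof.
  intros HL HU h z (a & b & Ha & Hb & ->).
  exists (conjg h a), (conjg h b). repeat split; auto. apply (morphR (conjg_hom h)).
Qed.

Lemma gen_comm (E : group) (L U : E -> Prop) :
  conj_closed L -> conj_closed U ->
  forall x y, gen L x -> gen U y -> gen (commset L U) (comm x y).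
Proof.
  intros HL HU.
  pose proof (gen_conj_closed (commset_conj_closed HL HU)) as HT.
  assert (HLx : forall x, L x -> forall y, gen U y -> gen (commset L U) (comm x y)).
  { intros x Hx y Hy. induction Hy as [y Hy| |y1 y2 _ IH1 _ IH2|y _ IH].
    - apply gen_in. exists x, y. auto.
    - replace (comm x gone) with (@gone E) by (unfold comm; gsimpl; reflexivity). apply gen1.
    - replace (comm x (gmul y1 y2)) with (gmul (comm x y2) (conjg y2 (comm x y1)))
        by (unfold comm, conjg; gsimpl; reflexivity).
      apply genM; [|apply HT]; assumption.
    - replace (comm x (ginv y)) with (ginv (conjg (ginv y) (comm x y)))
        by (unfold comm, conjg; gsimpl; reflexivity).
      apply genV, HT. assumption. }
  intros x y Hx Hy. induction Hx as [x Hx| |x1 x2 _ IH1 _ IH2|x _ IH].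
  - apply HLx; assumption.
  - replace (comm gone y) with (@gone E) by (unfold comm; gsimpl; reflexivity). apply gen1.
  - replace (comm (gmul x1 x2) y) with (gmul (conjg x2 (comm x1 y)) (comm x2 y))
      by (unfold comm, conjg; gsimpl; reflexivity).
    apply genM; [apply HT|]; assumption.
  - replace (comm (ginv x) y) with (ginv (conjg (ginv x) (comm x y)))
      by (unfold comm, conjg; gsimpl; reflexivity).
    apply genV, HT. assumption.
Qed.

Lemma perfect_gen_commset (E : group) (L U : E -> Prop) :
  perfect E -> conj_closed L -> conj_closed U ->
  (forall x, gen L x) -> (forall y, gen U y) -> forall g, gen (commset L U) g.
Proof.
  intros hp HL HU gL gU g. destruct (hp g) as [l ->].
  induction l as [|[a b] l IH]; simpl; [apply gen1|].
  apply genM; [apply gen_comm|]; auto.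
Qed.

Definition lcommset {E : group} (U : E -> Prop) (c : nat) (z : E) : Prop :=
  exists u, (forall j, U (u j)) /\ z = lcomm c u.

Lemma lcommset_conj_closed (E : group) (U : E -> Prop) c :
  conj_closed U -> conj_closed (lcommset U c).
Proof.
  intros HU h z (u & Hu & ->). exists (fun j => conjg h (u j)). split.
  - intro j. apply HU, Hu.
  - apply (morph_lcomm (conjg_hom h)).
Qed.

Lemma perfect_gen_lcommset (E : group) (U : E -> Prop) :
  perfect E -> conj_closed U -> (forall x, gen U x) -> forall c g, gen (lcommset U c) g.
Proof.
  intros hp HU gU c. induction c as [|c IH]; intro g.
  - apply (gen_mono (S := U)); [|apply gU]. intros x Hx. exists (fun _ => x). auto.
  - apply (gen_mono (S := commset (lcommset U c) U)).
    + intros z (a & b & (u & Hu & ->) & Hb & ->).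
      exists (fun j => if j =? S c then b else u j). split.
      * intro j. destruct (j =? S c); auto.
      * simpl. rewrite Nat.eqb_refl. f_equal. apply lcomm_ext. intros j Hj.
        destruct (Nat.eqb_spec j (S c)); [lia | reflexivity].
    + apply perfect_gen_commset; auto using lcommset_conj_closed.
Qed.

Definition wordvals (cs : list nat) (E : group) (z : E) : Prop :=
  exists x, z = polyword cs x.

Lemma wordvals_conj_closed cs (E : group) : conj_closed (wordvals cs E).
Proof.
  intros h z [x ->]. exists (fun t => conjg h (x t)). apply (morph_polyword cs (conjg_hom h)).
Qed.

Lemma lcommset_wordvals cs c (E : group) z :
  lcommset (wordvals cs E) c z -> wordvals (cs ++ [c]) E z.
Proof.
  intros (u & Hu & ->).
  destruct (@dep_functional_choice nat (fun _ => nat -> E) (fun j y => u j = polyword cs y) Hu)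
    as [y Hy].
  exists (fun t => y (t / arity cs) (t mod arity cs)). rewrite polyword_rcons.
  apply lcomm_ext. intros j _. rewrite Hy. apply polyword_local. intros k Hk.
  rewrite <- (Nat.div_unique (j * arity cs + k) (arity cs) j k),
          <- (Nat.mod_unique (j * arity cs + k) (arity cs) j k); reflexivity || nia.
Qed.

Lemma perfect_gen_wordvals cs (E : group) : perfect E -> forall g, gen (wordvals cs E) g.
Proof.
  intro hp. induction cs as [|c cs IH] using rev_ind; intro g.
  - apply gen_in. exists (fun _ => g). reflexivity.
  - apply (gen_mono (@lcommset_wordvals cs c E)).
    apply perfect_gen_lcommset; auto using wordvals_conj_closed.
Qed.

Section RestrictedProduct.
Variables (I : Type) (G : I -> group).

Definition coord (i : I) (a : rdp G) : G i := proj1_sig a i.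

Lemma coord_hom i : is_hom (coord i).
Proof. intros a b. reflexivity. Qed.

Lemma rdp_ext (a b : rdp G) : (forall i, coord i a = coord i b) -> a = b.
Proof. intro H. apply rdp_eq, functional_extensionality_dep, H. Qed.

Lemma rdp_eq1 (a : rdp G) : a = gone <-> forall i, coord i a = gone.
Proof. split; [intros -> i; reflexivity | intro H; apply rdp_ext, H]. Qed.

Definition single_fun (i : I) (y : G i) (j : I) : G j :=
  match excluded_middle_informative (i = j) with
  | left e => eq_rect i G y j e
  | right _ => gone
  end.

Lemma single_fun_supp i y : fin_supp G (single_fun i y).
Proof.
  exists [i]. intros j Hj. unfold single_fun.
  destruct (excluded_middle_informative (i = j)) as [<-|]; [exfalso; apply Hj; left|]; reflexivity.
Qed.

Definition rdp_single (i : I) (y : G i) : rdp G := exist _ (single_fun i y) (single_fun_supp i y).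

Lemma coord_single_eq i y : coord i (rdp_single i y) = y.
Proof.
  unfold coord, rdp_single, single_fun. simpl.
  destruct (excluded_middle_informative (i = i)) as [e|]; [|contradiction].
  rewrite (proof_irrelevance _ e eq_refl). reflexivity.
Qed.

Lemma coord_single_neq i j y : j <> i -> coord j (rdp_single i y) = gone.
Proof.
  intro Hji. unfold coord, rdp_single, single_fun. simpl.
  destruct (excluded_middle_informative (i = j)); [congruence | reflexivity].
Qed.

Definition factorg (i : I) : subgroup (rdp G).
Proof.
  refine (@Subgroup _ (fun a => forall j, j <> i -> coord j a = gone) _ _ _).
  - reflexivity.
  - intros a b Ha Hb j Hj. rewrite coord_hom, Ha, Hb by exact Hj. apply gmul1l.
  - intros a Ha j Hj. unfold coord in *. simpl. rewrite Ha by exact Hj. apply ginv1.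
Defined.

Definition cofactorg (i : I) : subgroup (rdp G) := preimg (coord_hom i) (trivg (G i)).

Lemma factorg_coord_inj i (a b : rdp G) :
  factorg i a -> factorg i b -> coord i a = coord i b -> a = b.
Proof.
  intros Ha Hb Hab. apply rdp_ext. intro j.
  destruct (excluded_middle_informative (j = i)) as [->|Hji]; [exact Hab|].
  rewrite Ha, Hb by exact Hji. reflexivity.
Qed.

End RestrictedProduct.

Lemma marginal_rdp cs (I : Type) (E : I -> group) (a : rdp E) :
  marginal cs a <-> forall i, marginal cs (coord i a).
Proof.
  split.
  - intros Ha i y k.
    pose proof (f_equal (coord i) (Ha (fun t => rdp_single E i (y t)) k)) as K.
    rewrite !(morph_polyword cs (coord_hom (G := E) i)), map_upd, coord_hom, coord_single_eq in K.
    replace (fun t => coord i (rdp_single E i (y t))) with y in K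
      by (apply functional_extensionality; intro t; symmetry; apply coord_single_eq).
    exact K.
  - intros Ha x k. apply rdp_ext. intro i.
    rewrite !(morph_polyword cs (coord_hom (G := E) i)), map_upd, coord_hom. apply Ha.
Qed.

Lemma capable_rdp cs (I : Type) (G : I -> group) :
  (forall i, capable cs (G i)) -> capable cs (rdp G).
Proof.
  intro HG.
  destruct (@dep_functional_choice I (fun i => {E : group & E -> G i})
    (fun i p => is_hom (projT2 p) /\ (forall y, exists e, projT2 p e = y) /\
                (forall e, projT2 p e = gone <-> marginal cs e))) as [p Hp].
  { intro i. destruct (HG i) as (E & f & Hf). exists (existT _ E f). exact Hf. }
  pose (E i := projT1 (p i)). pose (f i := projT2 (p i)).
  assert (supp : forall a : rdp E, fin_supp G (fun i => f i (coord i a))).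
  { intros [a [l Hl]]. exists l. intros i Hi. unfold coord. simpl.
    rewrite Hl by exact Hi. apply morph1, Hp. }
  exists (rdp E), (fun a => exist _ _ (supp a)). split; [|split].
  - intros a b. apply rdp_ext. intro i. apply (Hp i).
  - intro y.
    destruct (@dep_functional_choice I E
      (fun i e => f i e = coord i y /\ (coord i y = gone -> e = gone))) as [e He].
    { intro i. destruct (excluded_middle_informative (coord i y = gone)) as [Hy|Hy].
      - exists gone. split; [rewrite Hy; apply morph1, Hp | reflexivity].
      - destruct (proj1 (proj2 (Hp i)) (coord i y)) as [e He].
        exists e. split; [exact He | contradiction]. }
    assert (supp_e : fin_supp E e).
    { destruct (proj2_sig y) as [l Hl]. exists l. intros i Hi. apply He, Hl, Hi. }
    exists (exist _ e supp_e). apply rdp_ext. intro i. apply He.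
  - intro a. rewrite rdp_eq1, marginal_rdp. split; intros Ha i; apply (Hp i), Ha.
Qed.

Section Factor.
Variables (cs : list nat) (I : Type) (G : I -> group) (i : I) (E : group) (f : E -> rdp G).
Hypotheses (hf : is_hom f) (f_surj : forall y, exists e, f e = y)
  (ker_marginal : forall e, f e = gone -> marginal cs e).

Definition f_at (e : E) : G i := coord i (f e).

Lemma f_at_hom : is_hom f_at.
Proof. intros x y. unfold f_at. rewrite hf. apply coord_hom. Qed.

Let Ei : subgroup E := preimg hf (factorg G i).
Let Ci : subgroup E := preimg hf (cofactorg G i).
Let Zi : subgroup E := centralizer Ci.

Lemma polyword_factor_central (u : nat -> E) : (forall t, Ei (u t)) -> Zi (polyword cs u).
Proof.
  intros Hu b Hb.
  assert (Hfix : conjg b (polyword cs u) = polyword cs u).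
  { rewrite (morph_polyword cs (conjg_hom b)).
    apply (polyword_ker_congr hf ker_marginal). intro t. apply rdp_ext. intro j.
    rewrite (morphJ hf), (morphJ (coord_hom j)).
    destruct (excluded_middle_informative (j = i)) as [->|Hji].
    - change (coord i (f b) = gone) in Hb. rewrite Hb. unfold conjg. gsimpl. reflexivity.
    - rewrite (Hu t j Hji). unfold conjg. gsimpl. reflexivity. }
  unfold commute. rewrite <- Hfix at 2. unfold conjg. gsimpl. reflexivity.
Qed.

Lemma lift_factor (y : G i) : exists e, Ei e /\ f_at e = y.
Proof.
  destruct (f_surj (rdp_single G i y)) as [e He]. exists e. split.
  - intros j Hj. rewrite He. apply coord_single_neq, Hj.
  - unfold f_at. rewrite He. apply coord_single_eq.
Qed.

Hypothesis Gi_perfect : perfect (G i).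

Lemma lift_factor_central (y : G i) : exists z, (Ei z /\ Zi z) /\ f_at z = y.
Proof.
  apply (gen_lift f_at_hom (setIg Ei Zi) (S := wordvals cs (G i)));
    [|apply perfect_gen_wordvals, Gi_perfect].
  intros s [v ->].
  destruct (@dep_functional_choice nat (fun _ => E) (fun t e => Ei e /\ f_at e = v t)
    (fun t => lift_factor (v t))) as [L HL].
  exists (polyword cs L). split; [split|].
  - apply polyword_mem. intro t. apply HL.
  - apply polyword_factor_central. intro t. apply HL.
  - rewrite (morph_polyword cs f_at_hom). f_equal.
    apply functional_extensionality. intro t. apply HL.
Qed.

Lemma factor_decomp (x : E) : exists z, (Ei z /\ Zi z) /\ Ci (gmul (ginv z) x).
Proof.
  destruct (lift_factor_central (f_at x)) as [z [Hz Hzx]].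
  exists z. split; [exact Hz|]. change (f_at (gmul (ginv z) x) = gone).
  rewrite f_at_hom, (morphV f_at_hom), Hzx. apply gmulVl.
Qed.

Lemma marginal_factor (e : subg Ei) : marginal cs e -> marginal cs (proj1_sig e).
Proof.
  intros Hm x k. destruct e as [e He]. simpl.
  assert (HZC : forall h b, Zi h -> Ci b -> commute h b) by (intros h b Hh Hb; apply Hh, Hb).
  destruct (@dep_functional_choice nat (fun _ => E) _ (fun t => factor_decomp (x t)))
    as [z Hz].
  set (c t := gmul (ginv (z t)) (x t)).
  assert (Hx : forall t, x t = gmul (z t) (c t)) by (intro t; unfold c; gsimpl; reflexivity).
  destruct (lift_factor_central (f_at (gmul e (z k)))) as [z' [[Ez' Zz'] Hz']].
  assert (Hfz' : f z' = f (gmul e (z k))).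
  { apply (factorg_coord_inj Ez'); [apply (sgmemM Ei); [exact He | apply Hz] | exact Hz']. }
  set (a := upd z k z').
  assert (Ha : forall t, Zi (a t)).
  { intro t. unfold a, upd. destruct (t =? k); [exact Zz' | apply Hz]. }
  transitivity (polyword cs (fun t => gmul (a t) (c t))).
  { apply (polyword_ker_congr hf ker_marginal). intro t. unfold a, upd.
    destruct (Nat.eqb_spec t k) as [->|_]; symmetry.
    - rewrite hf, Hfz', <- hf, <- gmulA, <- Hx. reflexivity.
    - rewrite <- Hx. reflexivity. }
  rewrite (polyword_mul cs (c := c) HZC Ha (fun t => proj2 (Hz t))).
  transitivity (gmul (polyword cs z) (polyword cs c)).
  - f_equal. rewrite <- (marginal_subg_val z k Hm (fun t => proj1 (proj1 (Hz t)))).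
    apply (polyword_ker_congr hf ker_marginal). intro t.
    unfold a, upd. destruct (t =? k); [exact Hfz' | reflexivity].
  - rewrite <- (polyword_mul cs (c := c) HZC (fun t => proj2 (proj1 (Hz t)))
                                              (fun t => proj2 (Hz t))).
    f_equal. apply functional_extensionality. intro t. symmetry. apply Hx.
Qed.

Hypothesis marginal_ker : forall e, marginal cs e -> f e = gone.

Lemma capable_factor : capable cs (G i).
Proof.
  exists (subg Ei), (fun e => f_at (proj1_sig e)). split; [|split].
  - intros a b. apply f_at_hom.
  - intro y. destruct (lift_factor y) as [e [He Hy]]. exists (exist _ e He). exact Hy.
  - intros [e He]. simpl. split.
    + intro He1. apply marginal_subg, ker_marginal.
      apply (factorg_coord_inj He); [apply sgmem1 | exact He1].
    + intro Hm. apply marginal_factor, marginal_ker in Hm. simpl in Hm.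
      unfold f_at. rewrite Hm. reflexivity.
Qed.

End Factor.

Lemma capable_rdp_factor cs (I : Type) (G : I -> group) {i : I} :
  perfect (G i) -> capable cs (rdp G) -> capable cs (G i).
Proof.
  intros hp (E & f & hf & f_surj & hker).
  apply (capable_factor i hf f_surj); [intro e; apply hker | exact hp | intro e; apply hker].
Qed.

Theorem mainTheorem5 (I : Type) (G : I -> group) (cs : list nat)
  (hcs : cs <> nil) (hc : forall c, In c cs -> 1 <= c)
  (hperf : forall i, perfect (G i)) :
  capable cs (rdp G) <-> (forall i, capable cs (G i)).
Proof.
  split.
  - intros Hcap i. exact (capable_rdp_factor (hperf i) Hcap).
  - apply capable_rdp.
Qed.
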